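(* Under the good event $E$, the quantity $\widehat\lambda:=\left\|\widehat P\widehat M^{1/2}(\widehat P^\top\widehat f^* )^{\circ-1/2}\right\|_\infty^2$ satisfies $\widehat\lambda\le8\lambda$.
   Context: Two-stage causal MDP. Start state $0$, intermediate states $[k]$, terminal state. At each state $i\in\{0,\dots,k\}$: independent Bernoulli variables $X^i_1,\dots,X^i_n$, $q^i_j=\mathbb{P}\{X^i_j=1\}$ unknown; atomic interventions $\mathcal{I}_i=\{do()\}\cup\{do(X^i_j=0),do(X^i_j=1):j\in[n]\}$, $N=2n+1$ ($do(X^i_j=x)$ sets $X^i_j=x$, other variables drawn independently). Performing $a\in\mathcal{I}_0$ at state $0$ leads to $i\in[k]$ with unknown probability $P_{(a,i)}$ (depending stochastically on the realized $X^0$-values); $P\in\mathbb{R}^{N\times k}$, $p_+=\min\{P_{(a,i)}>0\}$. At state $i\in[k]$, after an intervention all $X^i_j$ and a reward $R_i\in\{0,1\}$ (law depending on the $X^i$-values) are observed; $\mathbb{E}[R_i\mid a]$ is the expected reward under $a\in\mathcal{I}_i$. Causal parameters: with $\bar q^i_j=\min(q^i_j,1-q^i_j)$ sorted as $\bar q^i_{(1)}\le\dots\le\bar q^i_{(n)}$, $m_i=\max\{j:\bar q^i_{(j)}<1/j\}$; $\mathcal{I}_{m_i}$ is the set of interventions setting a variable with $\bar q^i_{(j)}<1/j$ to its less likely value; $M=\mathrm{diag}(m_1,\dots,m_k)$. Frequency vectors: $f\in\mathbb{R}^N$, $f\ge0$, $\sum f_a=1$; $x^{\circ-1/2}$ is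 entrywise $x_i^{-1/2}$; $\lambda=\min_f\|PM^{1/2}(P^\top f)^{\circ-1/2}\|_\infty^2$. Algorithm ALG-CE with budget $T$ (estimates are empirical frequencies/means). Phase 1 ($T/3$ rounds): $T/6$ rounds of $do()$ at state $0$, giving estimates of $q^0_j$, $\widehat m_0$, $\mathcal{I}_{m_0}$, and $\widehat P_{(a,i)}$ for $a\notin\mathcal{I}_{m_0}$ (frequency of reaching $i$ among rounds whose $X^0$-values agree with $a$); then each $a\in\mathcal{I}_{m_0}$ is performed $T/(6|\mathcal{I}_{m_0}|)$ times to get $\widehat P_{(a,i)}$. Phase 2: $\tilde f\in\arg\max_f\min_i(\widehat P^\top f)_i$. Phase 3 ($T/3$ rounds): each $a\in\mathcal{I}_0$ performed $\frac12(\tilde f(a)+\frac1N)\frac T3$ times with $do()$ at the reached state, giving $\widehat m_i$, $\widehat M=\mathrm{diag}(\widehat m_1,\dots,\widehat m_k)$. Phase 4: $\widehat f^*\in\arg\min_f\|\widehat P\widehat M^{1/2}(\widehat P^\top f)^{\circ-1/2}\|_\infty$. Phase 5 ($T/3$ rounds): with $h(a)=\frac13(\widehat f^*(a)+\tilde f(a)+\frac1N)$, each $a$ performed $h(a)T/6$ times with $do()$ at the reached state (estimating $\mathcal{I}_{m_i}$ and $\widehat{\mathcal{R}}_{(b,i)}$ for $b\notin\mathcal{I}_{m_i}$ from rounds whose $X^i$-values agree with $b$), then $h(a)T/6$ times with round-robin over $b\in\mathcal{I}_{m_i}$ at the reached state $i$ (estimating $\widehat{\mathcal{R}}_{(b,i)}$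 for $b\in\mathcal{I}_{m_i}$). Output $\widehat\pi(i)\in\arg\max_b\widehat{\mathcal{R}}_{(b,i)}$, $\widehat\pi(0)\in\arg\max_a\sum_i\widehat P_{(a,i)}\widehat{\mathcal{R}}_{(\widehat\pi(i),i)}$. Good event $E=E_1\cap\dots\cap E_5$: ($E_1$) for every $a\in\mathcal{I}_0$, the transition estimates formed in each of Phases 1, 3, 5 satisfy $\sum_i|\widehat P_{(a,i)}-P_{(a,i)}|\le p_+/3$; ($E_2$) $\widehat m_0\in[\frac23m_0,2m_0]$; ($E_3$) $\widehat m_i\in[\frac23m_i,2m_i]$ for all $i\in[k]$ (for the estimates in Phases 3 and 5); ($E_4$) for all $a\in\mathcal{I}_0$, the Phase 1 estimates satisfy $\sum_i|\widehat P_{(a,i)}-P_{(a,i)}|\le\eta'$ with $\eta'=\sqrt{\frac{150m_0}{Tp_+}\log\frac{3T}{k}}$; ($E_5$) $|\mathbb{E}[R_i\mid a]-\widehat{\mathcal{R}}_{(a,i)}|\le\widehat\eta_i$ for all $i\in[k]$, $a\in\mathcal{I}_i$, with $\widehat\eta_i=\sqrt{\frac{27\widehat m_i}{T(\widehat P^\top\widehat f^* )_i}\log(2TN)}$. Here $\widehat P$ and $\widehat M$ denote the Phase 1 and Phase 3 estimates. *)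

From mathcomp Require Import all_boot all_order all_algebra.
From mathcomp Require Import classical_sets reals.
Set Implicit Arguments. Unset Strict Implicit. Unset Printing Implicit Defensive.
Import Order.TTheory GRing.Theory Num.Theory.
Local Open Scope ring_scope.
Local Open Scope classical_set_scope.

Section Defs.
Variable R : realType.

(* Causal parameter m(q) for n independent Bernoulli variables with
   P{X_j = 1} = q j:  qbar_j = min(q_j, 1 - q_j) sorted increasingly as
   qbar_(1) <= ... <= qbar_(n), and m = max{ j : qbar_(j) < 1/j }
   (with the convention max of the empty set = 0; never happens for n >= 1
   since qbar_(1) <= 1/2 < 1). *)
Definition qbar (n : nat) (q : 'I_n -> R) (j : 'I_n) : R :=
  Num.min (q j) (1 - q j).

Definition qbar_sorted (n : nat) (q : 'I_n -> R) : seq R :=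
  sort <=%R [seq qbar q j | j <- enum 'I_n].

Definition causal_m (n : nat) (q : 'I_n -> R) : nat :=
  \max_(j < n | nth 0 (qbar_sorted q) j < (j.+1%:R)^-1) j.+1.

(* p_+ = min { P(a,i) : P(a,i) > 0 } (the default 1 is irrelevant when P is
   row-stochastic, as every entry is <= 1 and some entry is positive). *)
Definition pplus (N k : nat) (P : 'M[R]_(N, k)) : R :=
  \big[Num.min/1]_(a < N) \big[Num.min/1]_(i < k | 0 < P a i) P a i.

Definition freq_vector (N : nat) (f : 'I_N -> R) : Prop :=
  (forall a, 0 <= f a) /\ \sum_(a < N) f a = 1.

Definition coverage (N k : nat) (P : 'M[R]_(N, k)) (f : 'I_N -> R) (i : 'I_k) : R :=
  \sum_(a < N) f a * P a i.

(* f is feasible for P when the vector P M^{1/2} (P^T f)^{o -1/2} is finite,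
   i.e. (P^T f)_i > 0 whenever some P(a,i) > 0 (convention 0 * oo = 0). *)
Definition feasible (N k : nat) (P : 'M[R]_(N, k)) (f : 'I_N -> R) : Prop :=
  forall a i, P a i != 0 -> 0 < coverage P f i.

Definition objective (N k : nat) (P : 'M[R]_(N, k)) (m : 'I_k -> nat)
    (f : 'I_N -> R) : R :=
  \big[Num.max/0]_(a < N)
     `| \sum_(i < k) P a i * Num.sqrt (m i)%:R / Num.sqrt (coverage P f i) |.

(* lambda = min_f || P M^{1/2} (P^T f)^{o -1/2} ||_oo^2 ; infeasible f give
   value +oo, so the minimum is the infimum over feasible frequency vectors. *)
Definition lambda_opt (N k : nat) (P : 'M[R]_(N, k)) (m : 'I_k -> nat) : R :=
  inf [set objective P m f ^+ 2 | f in [set f | freq_vector f /\ feasible P f]].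

End Defs.

From mathcomp Require Import all_boot all_order all_algebra.
From mathcomp Require Import classical_sets reals.
From mathcomp Require Import ring lra.
Import Order.TTheory GRing.Theory Num.Theory.
Local Open Scope ring_scope.

(* Since p_+ <= P(a,i) whenever P(a,i) > 0, the event E_1 forces every
   estimated entry into [2/3 P(a,i), 4/3 P(a,i)], hence every estimated
   coverage (Phat^T f)_i is at least 2/3 of the true one, while E_3 gives
   mhat_i <= 2 m_i.  Entrywise, the estimated objective of any f is thus at
   most 4/3 * sqrt(2 / (2/3)) = 4/3 * sqrt 3 times the true one.  As fhat*
   minimises the estimated objective, lambdahat <= (16/3) lambda <= 8 lambda. *)

Lemma mul_sqrt_ratio_le (R : rcfType) (al be ga p ph m mh c ch : R) :
  0 <= be -> 0 < ga -> 0 <= ph <= al * p -> 0 <= m -> 0 <= mh <= be * m ->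
  0 < c -> ga * c <= ch ->
  ph * Num.sqrt mh / Num.sqrt ch
    <= al * Num.sqrt (be / ga) * (p * Num.sqrt m / Num.sqrt c).
Proof.
move=> be0 ga0 /andP[ph0 php] m0 /andP[mh0 mhm] c0 chc.
have ch0 : 0 < ch by apply: lt_le_trans chc; exact: mulr_gt0.
have sqrt_div (x y : R) : 0 <= x -> 0 < y -> Num.sqrt x / Num.sqrt y = Num.sqrt (x / y).
  by move=> x0 y0; rewrite sqrtrM // sqrtrV // ltW.
have ratio_le : mh / ch <= be / ga * (m / c).
  rewrite mulrACA -invfM; apply: ler_pM => //; first by rewrite invr_ge0 ltW.
  by rewrite lef_pV2 ?posrE // mulr_gt0.
have lhsE : ph * Num.sqrt mh / Num.sqrt ch = ph * Num.sqrt (mh / ch).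
  by rewrite -mulrA sqrt_div.
have rhsE : al * Num.sqrt (be / ga) * (p * Num.sqrt m / Num.sqrt c)
    = al * p * Num.sqrt (be / ga * (m / c)).
  have bega0 : 0 <= be / ga by rewrite divr_ge0 // ltW.
  by rewrite -[p * _ / _]mulrA sqrt_div // (sqrtrM _ bega0) mulrACA.
rewrite lhsE rhsE; apply: ler_pM => //; first exact: sqrtr_ge0.
by rewrite ler_sqrt // !mulr_ge0 ?invr_ge0 // ltW.
Qed.

Lemma ler_sqr_scale (R : realFieldType) (x y c d : R) :
  0 <= x -> 0 <= c -> x <= c * y -> c ^+ 2 <= d -> x ^+ 2 <= d * y ^+ 2.
Proof.
move=> x0 c0 xle cd.
have cy0 : 0 <= c * y by apply: le_trans xle.
have : x ^+ 2 <= (c * y) ^+ 2 by rewrite ler_sqr.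
rewrite exprMn => /le_trans; apply.
by rewrite ler_wpM2r ?sqr_ge0.
Qed.

Section Objective.
Variables (R : realType) (N k : nat).
Implicit Types (P Q : 'M[R]_(N, k)) (f g : 'I_N -> R) (m : 'I_k -> nat).

Definition objective_term P m f a i : R :=
  P a i * Num.sqrt (m i)%:R / Num.sqrt (coverage P f i).

Lemma objective_ge0 P m f : 0 <= objective P m f.
Proof. exact: bigmax_ge_id. Qed.

Lemma objective_term_ge0 P m f a i : 0 <= P a i -> 0 <= objective_term P m f a i.
Proof. by move=> P0; rewrite !mulr_ge0 ?invr_ge0 ?sqrtr_ge0. Qed.

Lemma objective_le_scale P Q m m' f g c :
  0 <= c -> (forall a i, 0 <= P a i) ->
  (forall a i, objective_term P m f a i <= c * objective_term Q m' g a i) ->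
  objective P m f <= c * objective Q m' g.
Proof.
move=> c0 P0 term_le; apply: bigmax_le => [|a _]; first exact: mulr_ge0 (objective_ge0 _ _ _).
rewrite ger0_norm; last by apply: sumr_ge0 => i _; exact: objective_term_ge0.
apply: le_trans (ler_wpM2l c0 (le_bigmax _ _ a)).
apply: le_trans (ler_wpM2l c0 (ler_norm _)).
by rewrite mulr_sumr; apply: ler_sum => i _; exact: term_le.
Qed.

Lemma coverage_le_scale P Q f c i :
  freq_vector f -> (forall a, c * P a i <= Q a i) ->
  c * coverage P f i <= coverage Q f i.
Proof.
move=> [f0 _] PQ; rewrite /coverage mulr_sumr; apply: ler_sum => a _.
by rewrite mulrCA ler_wpM2l.
Qed.

Lemma feasible_le_scale P Q f c :
  0 < c -> (forall a i, Q a i != 0 -> P a i != 0) ->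
  (forall i, c * coverage P f i <= coverage Q f i) ->
  feasible P f -> feasible Q f.
Proof.
move=> c0 QP covPQ feasP a i /QP /feasP covP.
by apply: lt_le_trans (covPQ i); exact: mulr_gt0.
Qed.

End Objective.

Section LambdaOpt.
Variables (R : realType) (N k : nat).

Definition uniform_freq : 'I_N.+1 -> R := fun=> N.+1%:R^-1.

Lemma freq_vector_uniform : freq_vector uniform_freq.
Proof.
split=> [a|]; first by rewrite invr_ge0 ler0n.
by rewrite sumr_const card_ord -[_ *+ _]mulr_natr; apply: mulVf; rewrite pnatr_eq0.
Qed.

Lemma feasible_uniform (P : 'M[R]_(N.+1, k)) :
  (forall a i, 0 <= P a i) -> feasible P uniform_freq.
Proof.
move=> P0 a i Pai; rewrite /coverage (bigD1 a) //=.
apply: (@lt_le_trans _ _ (uniform_freq a * P a i)).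
  by rewrite mulr_gt0 ?invr_gt0 ?ltr0n // lt_def Pai P0.
by rewrite lerDl; apply: sumr_ge0 => b _; rewrite mulr_ge0 ?invr_ge0.
Qed.

Lemma lambda_opt_ge (P : 'M[R]_(N.+1, k)) m x :
  (forall a i, 0 <= P a i) ->
  (forall f, freq_vector f -> feasible P f -> x <= objective P m f ^+ 2) ->
  x <= lambda_opt P m.
Proof.
move=> P0 lbx; apply: lb_le_inf.
  exists (objective P m uniform_freq ^+ 2), uniform_freq => //.
  by split; [exact: freq_vector_uniform | exact: feasible_uniform].
by move=> _ [f [fP feasP] <-]; exact: lbx.
Qed.

End LambdaOpt.

Lemma pplus_le (R : realType) (N k : nat) (P : 'M[R]_(N, k)) a i :
  0 < P a i -> pplus P <= P a i.
Proof.
move=> Pai; apply: le_trans (bigmin_le _ a _) _.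
exact: (bigmin_le_cond _ (fun j => P a j) Pai).
Qed.

Section Estimation.
Variables (R : realType) (N k : nat) (P Phat : 'M[R]_(N, k)).
Hypothesis P_ge0 : forall a i, 0 <= P a i.
Hypothesis Phat_eq0 : forall a i, P a i = 0 -> Phat a i = 0.
Hypothesis Phat_l1_close :
  forall a, \sum_(i < k) `|Phat a i - P a i| <= pplus P / 3.

Lemma estimate_within a i : 2/3 * P a i <= Phat a i <= 4/3 * P a i.
Proof.
have [Pai0|Pai_neq0] := eqVneq (P a i) 0.
  by rewrite (Phat_eq0 _ _ Pai0) Pai0 !mulr0 lexx.
have Pai_gt0 : 0 < P a i by rewrite lt_def Pai_neq0 P_ge0.
have dist_le : `|Phat a i - P a i| <= P a i / 3.
  apply: le_trans (le_trans (Phat_l1_close a) _).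
    rewrite (bigD1 i) //= lerDl.
    by apply: sumr_ge0 => j _; exact: normr_ge0.
  by rewrite ler_wpM2r ?invr_ge0 ?ler0n ?pplus_le.
by move: dist_le; rewrite ler_norml => /andP[? ?]; apply/andP; split; lra.
Qed.

Lemma estimate_ge0 a i : 0 <= Phat a i.
Proof.
have /andP[+ _] := estimate_within a i.
by apply: le_trans; rewrite mulr_ge0 ?divr_ge0 ?ler0n.
Qed.

Lemma coverage_estimate_ge f i :
  freq_vector f -> 2/3 * coverage P f i <= coverage Phat f i.
Proof.
move=> fP; apply: coverage_le_scale => // a.
by case/andP: (estimate_within a i).
Qed.

Lemma feasible_estimate f : freq_vector f -> feasible P f -> feasible Phat f.
Proof.
move=> fP; apply: (@feasible_le_scale _ _ _ _ _ _ (2/3)).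
- by rewrite divr_gt0 ?ltr0n.
- by move=> a i; apply: contraNneq => /Phat_eq0 ->.
- by move=> i; exact: coverage_estimate_ge.
Qed.

Lemma objective_estimate_le m mh f :
  freq_vector f -> feasible P f ->
  (forall i, (mh i)%:R <= 2 * (m i)%:R :> R) ->
  objective Phat mh f <= 4/3 * Num.sqrt 3 * objective P m f.
Proof.
move=> fP feasP mh_le.
apply: objective_le_scale => [||a i]; first by rewrite mulr_ge0 ?divr_ge0 ?sqrtr_ge0.
  exact: estimate_ge0.
have [Pai0|Pai_neq0] := eqVneq (P a i) 0.
  by rewrite /objective_term (Phat_eq0 _ _ Pai0) Pai0 !mul0r mulr0.
have -> : Num.sqrt 3 = Num.sqrt (2 / (2/3)) :> R by congr Num.sqrt; field.
apply: mul_sqrt_ratio_le.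
- by rewrite ler0n.
- by rewrite divr_gt0 ?ltr0n.
- by rewrite estimate_ge0; case/andP: (estimate_within a i).
- by rewrite ler0n.
- by rewrite ler0n mh_le.
- exact: (feasP a i Pai_neq0).
- exact: coverage_estimate_ge.
Qed.

End Estimation.

Theorem lemma3 (R : realType) (n k : nat)
    (P Phat : 'M[R]_((2 * n).+1, k))
    (q qhat : 'I_k -> 'I_n -> R)
    (fstar : 'I_(2 * n).+1 -> R) :
  (* P is a transition matrix from state 0 to the states in [k] *)
  (forall a i, 0 <= P a i) ->
  (forall a, \sum_(i < k) P a i = 1) ->
  (* Phat: empirical transition frequencies (Phase 1) *)
  (forall a i, 0 <= Phat a i) ->
  (forall a i, P a i = 0 -> Phat a i = 0) ->
  (* q^i_j true probabilities, qhat^i_j empirical (Phase 3) frequencies *)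
  (forall i j, 0 <= q i j <= 1) ->
  (forall i j, 0 <= qhat i j <= 1) ->
  (* E_1 (Phase 1 estimates) *)
  (forall a, \sum_(i < k) `|Phat a i - P a i| <= pplus P / 3%:R) ->
  (* E_3 (Phase 3 estimates): mhat_i in [2/3 m_i, 2 m_i] *)
  (forall i, (2%:R / 3%:R) * (causal_m (q i))%:R <= (causal_m (qhat i))%:R :> R /\
             (causal_m (qhat i))%:R <= 2%:R * (causal_m (q i))%:R :> R) ->
  (* Phase 4: fhat* minimizes || Phat Mhat^{1/2} (Phat^T f)^{o -1/2} ||_oo *)
  freq_vector fstar -> feasible Phat fstar ->
  (forall f, freq_vector f -> feasible Phat f ->
     objective Phat (fun i => causal_m (qhat i)) fstar
       <= objective Phat (fun i => causal_m (qhat i)) f) ->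
  objective Phat (fun i => causal_m (qhat i)) fstar ^+ 2
    <= 8%:R * lambda_opt P (fun i => causal_m (q i)).
Proof.
move=> P_ge0 _ _ Phat_eq0 _ _ E1 E3 fstar_freq _ fstar_min.
set mhat := fun i => causal_m (qhat i); set m := fun i => causal_m (q i).
set c : R := 4/3 * Num.sqrt 3.
have c_ge0 : 0 <= c by rewrite mulr_ge0 ?divr_ge0 ?sqrtr_ge0.
have c2_le : c ^+ 2 <= 8.
  by rewrite exprMn sqr_sqrtr ?ler0n //; lra.
have X_le f : freq_vector f -> feasible P f ->
    objective Phat mhat fstar <= c * objective P m f.
  move=> fP feasP; apply: le_trans (fstar_min f fP _) _.
    exact: feasible_estimate.
  by apply: objective_estimate_le => // i; case: (E3 i).
rewrite -ler_pdivrMl ?ltr0n //; apply: lambda_opt_ge => // f fP feasP.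
rewrite ler_pdivrMl ?ltr0n //.
apply: ler_sqr_scale c_ge0 _ c2_le; [exact: objective_ge0 | exact: X_le].
Qed.
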